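(* Let $G$ be a graph on $n$ vertices and $1\le k\le n-1$. Suppose that $F_k(G)$ is uniquely reconstructible as the $k$-token graph of $G$. Then $\operatorname{Aut}(F_k(G))\simeq \operatorname{Aut}(G)\times\mathbb{Z}_2$ if $k=n/2$ and $n\ge 4$, and $\operatorname{Aut}(F_k(G))\simeq\operatorname{Aut}(G)$ otherwise.
   Context: $F_k(G)$ is the graph on the $k$-subsets of $V(G)$ in which $A,B$ are adjacent iff $A\triangle B$ is an edge of $G$. For $\psi$ an isomorphism between graphs $H\to G$, $\iota(\psi)$ maps a $k$-subset $A$ of $V(H)$ to $\{\psi(v):v\in A\}$. Let $\mathfrak{c}$ send each $k$-subset $A$ of $V(G)$ to $V(G)\setminus A$. A $k$-token reconstruction of a graph $F$ is a pair $(G',\varphi)$ with $\varphi$ an isomorphism $F\to F_k(G')$. Two $k$-token reconstructions $(G,\varphi),(G,\psi)$ of $F$ are equivalent if there is $s\in\operatorname{Aut}(G)$ with $\psi=\iota(s)\circ\varphi$ or $\psi=\mathfrak{c}\circ\iota(s)\circ\varphi$. $F$ is uniquely reconstructible as the $k$-token graph of $G$ if any two $k$-token reconstructions of $F$ of the form $(G,\cdot)$ are equivalent. *)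

From HB Require Import structures.
From mathcomp Require Import all_boot all_order all_fingroup all_algebra.
Set Implicit Arguments. Unset Strict Implicit. Unset Printing Implicit Defensive.

(* A (finite simple) graph G is given by a vertex finType V and an adjacency
   relation e : rel V which is symmetric and irreflexive. *)

Definition autG (V : finType) (e : rel V) : {set {perm V}} :=
  [set s : {perm V} | [forall x, forall y, e (s x) (s y) == e x y]].

Definition tok (V : finType) (k : nat) := {A : {set V} | #|A| == k}.

Definition symdiff (V : finType) (A B : {set V}) : {set V} := (A :\: B) :|: (B :\: A).

Definition tok_adj (V : finType) (e : rel V) (k : nat) : rel (tok V k) :=
  fun A B => [exists u, exists v, (symdiff (val A) (val B) == [set u; v]) && e u v].

Definition autF (V : finType) (e : rel V) (k : nat) : {set {perm tok V k}} :=
  [set f : {perm tok V k} | [forall A, forall B, @tok_adj V e k (f A) (f B) == @tok_adj V e k A B]].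

(* F_k(G) is uniquely reconstructible as the k-token graph of G: any two
   k-token reconstructions (G, phi), (G, psi) of F := F_k(G) are equivalent,
   i.e. psi = iota(s) o phi or psi = c o iota(s) o phi for some s in Aut(G).
   (phi, psi range over isomorphisms F_k(G) -> F_k(G).) *)
Definition uniquely_reconstructible (V : finType) (e : rel V) (k : nat) : Prop :=
  forall phi psi : {perm tok V k}, phi \in autF e k -> psi \in autF e k ->
    exists2 s : {perm V}, s \in autG e &
      (forall A, val (psi A) = s @: val (phi A)) \/
      (forall A, val (psi A) = ~: (s @: val (phi A))).

From HB Require Import structures.
From mathcomp Require Import all_boot all_order all_fingroup all_algebra.
From mathcomp Require Import zify.
Set Implicit Arguments. Unset Strict Implicit. Unset Printing Implicit Defensive.

Import GroupScope.

(* An automorphism s of G acts on k-sets by A |-> s @: A, giving an automorphism of F_k(G);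
   this action is faithful for 0 < k < n.  When n = 2k, complementation c is a further
   automorphism of order 2 commuting with the induced ones, and for k >= 2 it is not itself
   induced, so (s, a) |-> s(.) o c^a embeds Aut(G) x Z_2.  Applying unique reconstructibility
   to the pair (id, g) shows that every automorphism g of F_k(G) is s(.) or c o s(.), hence
   the embedding is onto.  Off the middle layer the second alternative forces n = 2k anyway,
   and then n = 2, k = 1, where complementing singletons is induced by the transposition of
   the two vertices. *)

Lemma exists_set_between (T : finType) (B C : {set T}) n :
  B \subset C -> #|B| <= n -> n <= #|C| ->
  exists A : {set T}, [/\ B \subset A, A \subset C & #|A| = n].
Proof.
move=> sBC; elim: n => [|n IHn] leBn lenC.
  by exists B; split=> //; apply/eqP; rewrite -leqn0.
have [ltBn | gtBn | eqBn] := ltngtP #|B| n.+1; last by exists B.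
- have [A [sBA sAC cardA]] := IHn ltBn (ltnW lenC).
  have /properP[_ [z zC zA]] : A \proper C by rewrite properEcard sAC cardA.
  exists (z |: A); split; first exact: subset_trans sBA (subsetUr _ _).
    by rewrite subUset sub1set zC.
  by rewrite cardsU1 zA cardA.
- by rewrite ltnNge leBn in gtBn.
Qed.

Section Automorphisms.
Variables (V : finType) (e : rel V) (k : nat).

Lemma autGP (s : {perm V}) :
  reflect (forall x y, e (s x) (s y) = e x y) (s \in autG e).
Proof.
rewrite inE; apply: (iffP forallP) => [Hs x y | Hs x]; first exact/eqP/(forallP (Hs x)).
by apply/forallP=> y; rewrite Hs.
Qed.

Lemma autFP (f : {perm tok V k}) :
  reflect (forall A B, tok_adj e (f A) (f B) = tok_adj e A B) (f \in autF e k).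
Proof.
rewrite inE; apply: (iffP forallP) => [Hf A B | Hf A]; first by move/forallP/(_ B)/eqP: (Hf A).
by apply/forallP=> B; rewrite Hf.
Qed.

Lemma autG_group_set : group_set (autG e).
Proof.
apply/group_setP; split; first by apply/autGP=> x y; rewrite !perm1.
by move=> s t /autGP Hs /autGP Ht; apply/autGP=> x y; rewrite !permM Ht Hs.
Qed.
Canonical autG_group := Group autG_group_set.

Lemma autF_group_set : group_set (autF e k).
Proof.
apply/group_setP; split; first by apply/autFP=> A B; rewrite !perm1.
by move=> f g /autFP Hf /autFP Hg; apply/autFP=> A B; rewrite !permM Hg Hf.
Qed.
Canonical autF_group := Group autF_group_set.

Definition is_edge (D : {set V}) := [exists u, exists v, (D == [set u; v]) && e u v].

Lemma tok_adjE (A B : tok V k) : tok_adj e A B = is_edge (symdiff (val A) (val B)).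
Proof. by []. Qed.

Lemma is_edge_imset s (D : {set V}) : s \in autG e -> is_edge (s @: D) = is_edge D.
Proof.
suff edge_im t (D' : {set V}) : t \in autG e -> is_edge D' -> is_edge (t @: D').
  move=> sA; apply/idP/idP; last exact: edge_im.
  by move/(edge_im _ _ (groupVr sA)); rewrite -imset_comp (eq_imset _ (permK s)) imset_id.
move=> /autGP tA /existsP[u /existsP[v /andP[/eqP-> euv]]].
apply/existsP; exists (t u); apply/existsP; exists (t v).
by rewrite imsetU1 imset_set1 tA euv eqxx.
Qed.

End Automorphisms.

Lemma symdiff_imset (T : finType) (s : {perm T}) (A B : {set T}) :
  symdiff (s @: A) (s @: B) = s @: symdiff A B.
Proof. by apply/setP=> x; rewrite -!preim_permV !inE. Qed.

Lemma symdiffC (T : finType) (A B : {set T}) : symdiff (~: A) (~: B) = symdiff A B.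
Proof. by rewrite /symdiff !setDE !setCK setUC; congr (_ :|: _); apply: setIC. Qed.

Section Tokens.
Variables (V : finType) (k : nat).

Lemma exists_tok (B C : {set V}) :
  B \subset C -> #|B| <= k -> k <= #|C| ->
  exists2 A : tok V k, B \subset val A & val A \subset C.
Proof.
move=> sBC leBk lekC; have [A [sBA sAC /eqP cardA]] := exists_set_between sBC leBk lekC.
by exists (Sub A cardA).
Qed.

Definition tok_imset (s : {perm V}) (A : tok V k) : tok V k := insubd A (s @: val A).

Lemma val_tok_imset s A : val (tok_imset s A) = s @: val A.
Proof. by rewrite val_insubd card_imset ?(valP A) //; apply: perm_inj. Qed.

Lemma tok_imset_inj (s : {perm V}) : injective (tok_imset s).
Proof.
move=> A B /(congr1 val); rewrite !val_tok_imset => /imset_inj AB.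
by apply: val_inj; apply: AB; apply: perm_inj.
Qed.

Definition tok_perm (s : {perm V}) : {perm tok V k} := perm (@tok_imset_inj s).

Lemma tok_permE s A : val (tok_perm s A) = s @: val A.
Proof. by rewrite permE val_tok_imset. Qed.

Lemma tok_permM : {morph tok_perm : s t / s * t}.
Proof.
move=> s t; apply/permP=> A; apply: val_inj.
by rewrite permM !tok_permE -imset_comp; apply: eq_imset => x; rewrite /= permM.
Qed.

Canonical tok_perm_morphism := @Morphism _ _ [set: {perm V}] tok_perm (in2W tok_permM).

Lemma tok_perm_eq1 s : 0 < k < #|V| -> tok_perm s = 1 -> s = 1.
Proof.
case/andP=> k_gt0 k_ltn s1; apply/permP=> x; rewrite perm1; apply/eqP/negPn/negP=> sx_x.
have [A xA sA] : exists2 A : tok V k, [set x] \subset val A & val A \subset ~: [set s x].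
  by apply: exists_tok; rewrite ?sub1set ?inE 1?eq_sym ?cards1 ?cardsC1 //; lia.
have : s x \in val (tok_perm s A) by rewrite tok_permE mem_imset -?sub1set //; apply: perm_inj.
by rewrite s1 perm1 => /(subsetP sA); rewrite !inE eqxx.
Qed.

Lemma tok_perm_injm : 0 < k < #|V| -> 'injm tok_perm_morphism.
Proof. by move=> k_bounds; apply/subsetP=> s /mker/(tok_perm_eq1 k_bounds)->. Qed.

Lemma tok_perm_not_compl s : 1 < k <= #|V| -> ~ (forall A : tok V k, s @: val A = ~: val A).
Proof.
case/andP=> k_gt1 k_len s_compl; have /card_gt0P[x _] : 0 < #|V| by lia.
have [A sxA _] : exists2 A : tok V k, [set x; s x] \subset val A & val A \subset setT.
  by apply: exists_tok; rewrite ?subsetT ?cardsT ?cards2 //; case: (x != s x); lia.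
have : s x \in s @: val A by apply/imset_f/(subsetP sxA); rewrite !inE eqxx.
by rewrite s_compl inE (subsetP sxA) // !inE eqxx orbT.
Qed.

Section Complement.
Hypothesis k_half : k.*2 = #|V|.

Lemma card_setC_tok (A : tok V k) : #|~: val A| == k.
Proof. by rewrite cardsCs setCK -k_half (eqP (valP A)) -addnn addnK. Qed.

Definition tok_setC (A : tok V k) : tok V k := Sub (~: val A) (card_setC_tok A).

Lemma tok_setCK : involutive tok_setC.
Proof. by move=> A; apply: val_inj; rewrite !SubK setCK. Qed.

Definition tok_compl : {perm tok V k} := perm (inv_inj tok_setCK).

Lemma tok_complE A : val (tok_compl A) = ~: val A.
Proof. by rewrite permE SubK. Qed.

Lemma tok_compl_sqr : tok_compl ^+ 2 = 1.
Proof. by apply/permP=> A; rewrite expgS expg1 permM perm1 !permE tok_setCK. Qed.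

Lemma tok_compl_comm s : commute (tok_perm s) tok_compl.
Proof.
apply/permP=> A; apply: val_inj.
by rewrite !permM tok_permE !tok_complE tok_permE -!preim_permV preimsetC.
Qed.
End Complement.

End Tokens.

Lemma tok_half_of_compl (V : finType) k (A B : tok V k) : val A = ~: val B -> k.*2 = #|V|.
Proof. by move=> AB; rewrite -(cardsC (val B)) -AB (eqP (valP A)) (eqP (valP B)) addnn. Qed.

Lemma setC1_tperm_card2 (T : finType) (x y a : T) :
  #|T| = 2 -> x != y -> ~: [set a] = [set tperm x y a].
Proof.
move=> T2 xy; have xyT : [set x; y] = setT.
  by apply/eqP; rewrite eqEcard subsetT cardsT cards2 xy T2.
apply/eqP; rewrite eq_sym eqEcard sub1set !inE cards1 cardsC1 T2 andbT.
have : a \in [set x; y] by rewrite xyT inE.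
by case/set2P=> ->; rewrite ?tpermL ?tpermR // eq_sym.
Qed.

Section AutTok.
Variables (V : finType) (e : rel V) (k : nat).

Lemma tok_perm_autF s : s \in autG e -> tok_perm k s \in autF e k.
Proof.
by move=> sA; apply/autFP=> A B; rewrite !tok_adjE !tok_permE symdiff_imset is_edge_imset.
Qed.

Lemma tok_compl_autF (k_half : k.*2 = #|V|) : tok_compl k_half \in autF e k.
Proof. by apply/autFP=> A B; rewrite !tok_adjE !tok_complE symdiffC. Qed.

Lemma tperm_autG_card2 x y : symmetric e -> irreflexive e ->
  #|V| = 2 -> x != y -> tperm x y \in autG e.
Proof.
move=> e_sym e_irr V2 xy; have xyT : [set x; y] = setT.
  by apply/eqP; rewrite eqEcard subsetT cardsT cards2 xy V2.
have xyP a : a \in [set x; y] by rewrite xyT inE.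
apply/autGP=> a b.
by case/set2P: (xyP a) => ->; case/set2P: (xyP b) => ->;
  rewrite ?tpermL ?tpermR ?e_irr // e_sym.
Qed.

Lemma uniquely_reconstructible_autF g : uniquely_reconstructible e k -> g \in autF e k ->
  exists2 s, s \in autG e &
    g = tok_perm k s \/ forall A, val (g A) = ~: val (tok_perm k s A).
Proof.
move=> Huniq gA; have [s sA [gE | gE]] := Huniq 1 g (group1 _) gA; exists s => //.
  by left; apply/permP=> A; apply: val_inj; rewrite gE tok_permE perm1.
by right=> A; rewrite gE tok_permE perm1.
Qed.

End AutTok.

Section MiddleLayer.
Variables (V : finType) (e : rel V) (k : nat).
Hypotheses (k_half : k.*2 = #|V|) (k_gt1 : 1 < k).
Let c := tok_compl k_half.

Definition tok_perm_Z2 (p : {perm V} * 'Z_2) : {perm tok V k} := tok_perm k p.1 * c ^+ p.2.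

Lemma tok_perm_Z2M : {morph tok_perm_Z2 : p q / p * q}.
Proof.
move=> [s a] [t b]; rewrite /tok_perm_Z2 /= tok_permM.
rewrite (expg_mod _ (tok_compl_sqr k_half)) expgD.
rewrite -!mulgA; congr (_ * _); rewrite !mulgA; congr (_ * _).
exact/commuteX/tok_compl_comm.
Qed.

Canonical tok_perm_Z2_morphism :=
  @Morphism _ _ [set: {perm V} * 'Z_2] tok_perm_Z2 (in2W tok_perm_Z2M).

Lemma tok_perm_Z2_injm : 'injm tok_perm_Z2_morphism.
Proof.
have k_bounds : 0 < k < #|V| by lia.
apply/subsetP=> -[s [[|[|a]] a_lt2]] /mker //=; rewrite /tok_perm_Z2 /=.
- rewrite expg0 mulg1 => /(tok_perm_eq1 k_bounds)->; rewrite inE.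
  by apply/eqP/injective_projections => //; apply: val_inj.
- rewrite expg1 => sc1; have sc : tok_perm k s = c.
    by rewrite -[tok_perm k s]mulg1 -(tok_compl_sqr k_half) expgS expg1 mulgA sc1 mul1g.
  case: (@tok_perm_not_compl V k s); first by lia.
  by move=> A; rewrite -tok_permE sc tok_complE.
Qed.

Lemma im_tok_perm_Z2 : uniquely_reconstructible e k ->
  tok_perm_Z2_morphism @* setX (autG e) [set: 'Z_2] = autF e k.
Proof.
move=> Huniq; rewrite morphimEsub ?subsetT //; apply/setP=> g; apply/imsetP/idP.
- case=> -[s a]; rewrite inE /= => /andP[sA _] ->.
  by rewrite /= groupM ?groupX ?tok_perm_autF ?tok_compl_autF.
- case/(uniquely_reconstructible_autF Huniq) => s sA [gE | gE].
  + exists (s, ord0); first by rewrite in_setX sA in_setT.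
    by rewrite gE /= /tok_perm_Z2 /= expg0 mulg1.
  + exists (s, ord_max); first by rewrite in_setX sA in_setT.
    by apply/permP=> A; apply: val_inj; rewrite /= /tok_perm_Z2 /= expg1 permM tok_complE gE.
Qed.

Lemma autF_isog_middle : uniquely_reconstructible e k ->
  autF e k \isog setX (autG e) [set: 'Z_2].
Proof.
move=> Huniq; rewrite isog_sym.
have := sub_isog (subsetT (setX (autG e) [set: 'Z_2])) tok_perm_Z2_injm.
by rewrite im_tok_perm_Z2.
Qed.

End MiddleLayer.

Section OffMiddleLayer.
Variables (V : finType) (e : rel V) (k : nat).
Hypotheses (e_sym : symmetric e) (e_irr : irreflexive e) (k_bounds : 0 < k < #|V|).
Hypothesis not_middle : ~~ ((k.*2 == #|V|) && (4 <= #|V|)).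

Lemma im_tok_perm : uniquely_reconstructible e k -> tok_perm_morphism V k @* autG e = autF e k.
Proof.
move=> Huniq; rewrite morphimEsub ?subsetT //; apply/setP=> g; apply/imsetP/idP.
  by case=> s sA ->; apply: tok_perm_autF.
case/(uniquely_reconstructible_autF Huniq) => s sA [-> | gE]; first by exists s.
have [A0 _ _] : exists2 A : tok V k, set0 \subset val A & val A \subset setT.
  by apply: exists_tok; rewrite ?sub0set ?cards0 ?cardsT //; lia.
have k_half := tok_half_of_compl (gE A0).
have V2 : #|V| = 2.
  by move: not_middle k_bounds; rewrite -k_half eqxx /= -ltnNge -addnn; lia.
have /card_gt1P[x [y [_ _ xy]]] : 1 < #|V| by rewrite V2.
exists (s * tperm x y); first by rewrite groupM ?tperm_autG_card2.
apply/permP=> A; apply: val_inj; rewrite gE !tok_permE.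
have /cards1P[a ->] : #|val A| == 1%N.
  by rewrite (eqP (valP A)); move: V2; rewrite -k_half -addnn; lia.
by rewrite !imset_set1 permM (setC1_tperm_card2 _ V2 xy).
Qed.

Lemma autF_isog_autG : uniquely_reconstructible e k -> autF e k \isog autG e.
Proof.
move=> Huniq; rewrite isog_sym.
by have := sub_isog (subsetT (autG e)) (tok_perm_injm k_bounds); rewrite im_tok_perm.
Qed.

End OffMiddleLayer.

Theorem proposition5 (V : finType) (e : rel V)
  (e_sym : symmetric e) (e_irr : irreflexive e)
  (k : nat) (hk1 : 1 <= k) (hk2 : k <= #|V| - 1)
  (Huniq : uniquely_reconstructible e k) :
  if (k.*2 == #|V|) && (4 <= #|V|)
  then autF e k \isog setX (autG e) [set: 'Z_2]
  else autF e k \isog autG e.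
Proof.
case: ifP => [/andP[/eqP k_half V_ge4] | /negbT not_middle].
  have k_gt1 : 1 < k by move: V_ge4; rewrite -k_half -addnn; lia.
  exact: autF_isog_middle k_half k_gt1 Huniq.
have k_bounds : 0 < k < #|V| by lia.
exact: autF_isog_autG e_sym e_irr k_bounds not_middle Huniq.
Qed.
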